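(* Let $(X,d)$ be a metric space, $\mu$ a non-atomic Borel measure on $X$, $f:X\to\mathbb R$ a function and $\gamma:[0,h]\to X$ a path in $\Gamma^\mu$ parametrized by $\mu$-arc length. If there is a nonnegative Borel measurable $\rho:X\to\mathbb R$ such that $|f(\gamma(s))-f(\gamma(t))|\le\int_{\gamma|_{[s,t]}}\rho<\infty$ for every $0\le s<t\le h$, then $f\circ\gamma:[0,h]\to\mathbb R$ is absolutely continuous.
   Context: A path is a continuous map $\gamma:[a,b]\to X$; a subpath is a restriction to a subinterval, trivial if that interval is a point; $\mathrm{Im}(\gamma)=\gamma([a,b])$. $\mu$ non-atomic: $\mu(\{x\})=0$ for all $x$. $\Gamma^\mu$ is the set of all non-trivial injective paths $\gamma$ with $0<\mu(\mathrm{Im}(\tilde\gamma))<\infty$ for every non-trivial subpath $\tilde\gamma$. For Borel $g\ge0$, $\int_\gamma g:=\int_{\mathrm{Im}(\gamma)}g\,d\mu$. A path $\gamma:[0,h]\to X$ in $\Gamma^\mu$ is parametrized by $\mu$-arc length if $\mu(\gamma([0,t]))=t$ for all $t\in[0,h]$. *)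

From HB Require Import structures.
From mathcomp Require Import all_boot all_order all_algebra.
From mathcomp Require Import all_classical all_reals all_analysis.
Set Implicit Arguments. Unset Strict Implicit. Unset Printing Implicit Defensive.
Import Order.TTheory GRing.Theory Num.Theory numFieldNormedType.Exports.
Local Open Scope classical_set_scope.
Local Open Scope ring_scope.

Notation borel X := (g_sigma_algebraType (@open X)).

(* metric spaces with a distinguished point (needed only because the library's
   generated sigma-algebra construction requires a pointed carrier; every
   space in the theorem is nonempty since it carries a path). *)
#[short(type="pmetricType")]
HB.structure Definition PointedMetric (K : numDomainType) :=
  {M of Pointed M & PseudoMetric K M & PseudoMetric_isMetric K M}.

Section defs.
Context {R : realType} {X : ptopologicalType}.
Local Notation BX := (borel X).

Definition non_atomic (mu : set BX -> \bar R) : Prop :=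
  forall x : X, mu [set x] = 0%E.

Definition is_path (gamma : R -> X) (a b : R) : Prop :=
  a <= b /\ {within [set x : R | a <= x <= b], continuous gamma}.

Definition in_Gamma_mu (mu : set BX -> \bar R) (gamma : R -> X) (a b : R)
  : Prop :=
  [/\ is_path gamma a b, a < b,
      (forall s t, a <= s <= b -> a <= t <= b -> gamma s = gamma t -> s = t)
    & forall s t, a <= s -> s < t -> t <= b ->
        (0 < mu (gamma @` `[s, t]))%E /\ (mu (gamma @` `[s, t]) < +oo)%E].

Definition mu_arc_length (mu : set BX -> \bar R) (gamma : R -> X) (h : R)
  : Prop :=
  forall t, 0 <= t <= h -> mu (gamma @` `[0, t]) = t%:E.

Definition path_integral (mu : {measure set BX -> \bar R}) (gamma : R -> X)
  (s t : R) (g : X -> R) : \bar R :=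
  (\int[mu]_(x in (gamma @` `[s, t] : set BX)) (g x)%:E)%E.

End defs.

Definition abs_continuous_on {R : realType} (F : R -> R) (a b : R) : Prop :=
  forall eps : R, 0 < eps -> exists2 delta : R, 0 < delta &
    forall (n : nat) (l r : 'I_n -> R),
      (forall i, a <= l i /\ l i < r i /\ r i <= b) ->
      (forall i j, i != j -> r i <= l j \/ r j <= l i) ->
      \sum_(i < n) (r i - l i) < delta ->
      \sum_(i < n) `|F (r i) - F (l i)| < eps.

From HB Require Import structures.
From mathcomp Require Import all_boot all_order all_algebra.
From mathcomp Require Import all_classical all_reals all_analysis.
From mathcomp Require Import measurable_realfun.
Import Order.TTheory GRing.Theory Num.Theory numFieldNormedType.Exports.
Set Implicit Arguments. Unset Strict Implicit. Unset Printing Implicit Defensive.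
Local Open Scope classical_set_scope.
Local Open Scope ring_scope.

(* The intervals [l_i, r_i] are carried by the arc-length parametrization onto
   the disjoint "half-open" pieces gamma([l_i, r_i]) \ {gamma(l_i)} of total
   measure sum (r_i - l_i); since mu has no atoms, the bound on
   |f(gamma r_i) - f(gamma l_i)| is the integral of rho over the i-th piece.
   Absolute continuity of the integral of the integrable function rho on
   gamma([0, h]) then makes the total small when the total length is. *)

Lemma integral_abs_continuous d (T : measurableType d) (R : realType)
    (mu : {measure set T -> \bar R}) (E : set T) (f : T -> R) :
  measurable E -> mu.-integrable E (EFin \o f) ->
  forall eps, 0 < eps -> exists2 delta, 0 < delta &
    forall A, measurable A -> A `<=` E -> (mu A < delta%:E)%E ->
      (\int[mu]_(x in A) `|f x|%:E < eps%:E)%E.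
Proof.
move=> mE intf eps eps0; have [mf intE] := integrableP _ _ _ intf.
have intg : mu.-integrable setT (EFin \o f \_ E).
  have := (integrable_mkcond _ mE).1 intf; apply: eq_integrable => // x _.
  by rewrite /patch /=; case: ifP.
have [delta [delta0 small]] := integral_normr_continuous intg eps0.
exists delta => // A mA AE muA.
have intA : (\int[mu]_(x in A) `|f x|%:E < +oo)%E.
  apply: le_lt_trans intE; apply: ge0_subset_integral => //.
  by apply/measurable_EFinP; apply: measurableT_comp => //; exact/measurable_EFinP.
have patchE :
    (\int[mu]_(x in A) `|(f \_ E) x|%:E = \int[mu]_(x in A) `|f x|%:E)%E.
  by apply: eq_integral => x /[!inE] /AE Ex; rewrite patchT ?inE.
have := small A mA muA; rewrite /Rintegral patchE -lte_fin fineK //.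
by rewrite ge0_fin_numE //; exact: integral_ge0.
Qed.

Lemma closed_borel_measurable (X : ptopologicalType) (A : set X) :
  closed A -> measurable (A : set (borel X)).
Proof.
move=> cA; rewrite -(setCK A); apply: measurableC.
by apply: sub_sigma_algebra; exact: closed_openC.
Qed.

Lemma set1_borel_measurable (R : realType) (X : pmetricType R) (x : X) :
  measurable ([set x] : set (borel X)).
Proof.
apply: closed_borel_measurable; apply: accessible_closed_set1.
exact/hausdorff_accessible/metric_hausdorff.
Qed.

Definition arc_piece {R : realType} {X : Type} (gamma : R -> X) (l r : R) :=
  gamma @` `[l, r] `\ gamma l.

Section arc_pieces.
Variables (R : realType) (X : pmetricType R) (gamma : R -> X) (h : R).
Hypothesis gamma_cont : {within [set t | 0 <= t <= h], continuous gamma}.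
Hypothesis gamma_inj : forall s t, 0 <= s <= h -> 0 <= t <= h ->
  gamma s = gamma t -> s = t.

Lemma arc_image_closed l r : 0 <= l -> r <= h -> closed (gamma @` `[l, r]).
Proof.
move=> l0 rh; apply: compact_closed; first exact: metric_hausdorff.
apply: continuous_compact; last exact: segment_compact.
apply: continuous_subspaceW gamma_cont => t /=; rewrite in_itv /= => /andP[lt tr].
by rewrite (le_trans l0 lt) (le_trans tr rh).
Qed.

Lemma arc_image_measurable l r : 0 <= l -> r <= h ->
  measurable (gamma @` `[l, r] : set (borel X)).
Proof. by move=> l0 rh; apply: closed_borel_measurable; exact: arc_image_closed. Qed.

Lemma arc_piece_measurable l r : 0 <= l -> r <= h ->
  measurable (arc_piece gamma l r : set (borel X)).
Proof.
move=> l0 rh; apply: measurableD; first exact: arc_image_measurable.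
exact: set1_borel_measurable.
Qed.

Lemma mem_arc_image s l r : 0 <= s <= h -> 0 <= l -> r <= h ->
  (gamma @` `[l, r]) (gamma s) <-> l <= s <= r.
Proof.
move=> /andP[s0 sh] l0 rh; split; last by exists s => //; rewrite /= in_itv.
case=> t; rewrite /= in_itv /= => /andP[lt tr] /gamma_inj <-; first by rewrite lt tr.
  by rewrite (le_trans l0 lt) (le_trans tr rh).
by rewrite s0 sh.
Qed.

Lemma mem_arc_piece s l r : 0 <= s <= h -> 0 <= l -> r <= h ->
  arc_piece gamma l r (gamma s) <-> l < s <= r.
Proof.
move=> sh l0 rh; split.
  case=> /mem_arc_image-/(_ sh l0 rh) /andP[ls ->] nsl; rewrite andbT lt_neqAle ls.
  by rewrite andbT; apply: contra_notN nsl => /eqP <-.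
move=> /andP[ls sr]; split; first by apply/mem_arc_image; rewrite // (ltW ls).
have lh : l <= h by case/andP: sh => _; exact/le_trans/ltW.
by move=> /gamma_inj sl; move: ls; rewrite sl ?ltxx ?l0.
Qed.

Lemma arc_piece_sub l r : 0 <= l -> r <= h ->
  arc_piece gamma l r `<=` gamma @` `[0, h].
Proof.
move=> l0 rh x [[t]]; rewrite /= in_itv /= => /andP[lt tr] <- _.
by exists t => //; rewrite /= in_itv /= (le_trans l0 lt) (le_trans tr rh).
Qed.

Lemma arc_image_split l r : 0 <= l <= r -> r <= h ->
  gamma @` `[0, r] = gamma @` `[0, l] `|` arc_piece gamma l r.
Proof.
move=> /andP[l0 lr] rh; have lh := le_trans lr rh.
apply/seteqP; split=> x.
  case=> t; rewrite /= in_itv /= => /andP[t0 tr] <-.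
  have th : 0 <= t <= h by rewrite t0 (le_trans tr rh).
  case: (leP t l) => tl; last by right; apply/mem_arc_piece; rewrite ?tl.
  by left; exists t => //; rewrite in_itv /= t0 tl.
case=> [[t] | [[t] + <- _]]; rewrite /= in_itv /= => /andP[t0 tr].
  by move=> <-; apply/mem_arc_image; rewrite ?t0 ?(le_trans tr lr) ?(le_trans tr lh).
by apply/mem_arc_image; rewrite ?(le_trans l0 t0) ?tr ?(le_trans tr rh).
Qed.

Lemma arc_image_piece_disjoint l r : 0 <= l <= r -> r <= h ->
  gamma @` `[0, l] `&` arc_piece gamma l r = set0.
Proof.
move=> /andP[l0 lr] rh; apply/seteqP; split=> // x [[t]].
rewrite /= in_itv /= => /andP[t0 tl] <-.
have th : 0 <= t <= h by rewrite t0 (le_trans tl (le_trans lr rh)).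
by move=> /(mem_arc_piece th l0 rh); rewrite ltNge tl.
Qed.

Lemma arc_pieces_trivIset n (l r : 'I_n -> R) :
  (forall i, 0 <= l i /\ l i < r i /\ r i <= h) ->
  (forall i j, i != j -> r i <= l j \/ r j <= l i) ->
  trivIset setT (fun i => arc_piece gamma (l i) (r i)).
Proof.
move=> lr disj i j _ _ [x [Pix Pjx]]; case: (eqVneq i j) => // /disj.
have [l0 [_ rh]] := lr i; have [l0' [_ rh']] := lr j.
have [t] := arc_piece_sub l0 rh Pix; rewrite /= in_itv /= => th tx; subst x.
move: Pix Pjx => /(mem_arc_piece th l0 rh) /andP[lit tri].
move=> /(mem_arc_piece th l0' rh') /andP[ljt trj].
by case=> [rl | rl]; [move: ljt | move: lit]; rewrite ltNge (le_trans _ rl).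
Qed.

Lemma bigsetU_arc_pieces_sub n (l r : 'I_n -> R) :
  (forall i, 0 <= l i /\ l i < r i /\ r i <= h) ->
  \big[setU/set0]_(i < n) arc_piece gamma (l i) (r i) `<=` gamma @` `[0, h].
Proof.
move=> lr; elim/big_ind: _ => [//|A B AE BE x [/AE|/BE] //|i _].
by have [l0 [_ rh]] := lr i; exact: arc_piece_sub.
Qed.

Variable mu : {measure set (borel X) -> \bar R}.
Hypothesis arc_length : mu_arc_length mu gamma h.

Lemma measure_arc_piece l r : 0 <= l <= r -> r <= h ->
  mu (arc_piece gamma l r) = (r - l)%:E.
Proof.
move=> lr rh; have /andP[l0 lr'] := lr; have lh := le_trans lr' rh.
have mu_l : mu (gamma @` `[0, l]) = l%:E by apply: arc_length; rewrite l0 lh.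
have r_in : 0 <= r <= h by rewrite (le_trans l0 lr') rh.
have := arc_length r_in; rewrite (arc_image_split lr rh) measureU.
- move=> sum_r; rewrite EFinB -sum_r -mu_l addeAC subee ?add0r //.
  by rewrite [X in X \is a fin_num](_ : _ = l%:E); last exact: mu_l.
- exact: arc_image_measurable.
- exact: arc_piece_measurable.
- exact: arc_image_piece_disjoint.
Qed.

Lemma measure_bigsetU_arc_pieces n (l r : 'I_n -> R) :
  (forall i, 0 <= l i /\ l i < r i /\ r i <= h) ->
  (forall i j, i != j -> r i <= l j \/ r j <= l i) ->
  mu (\big[setU/set0]_(i < n) arc_piece gamma (l i) (r i)) =
    (\sum_(i < n) (r i - l i))%:E.
Proof.
move=> lr disj; rewrite measure_bigsetU_ord; last exact: arc_pieces_trivIset.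
  rewrite -sumEFin; apply: eq_bigr => i _; have [l0 [lri rh]] := lr i.
  by rewrite -(measure_arc_piece _ rh) // l0 ltW.
by move=> i; have [l0 [_ rh]] := lr i; exact: arc_piece_measurable.
Qed.

Lemma path_integral_arc_piece (rho : X -> R) l r : non_atomic mu ->
  (forall x, 0 <= rho x) -> measurable_fun (setT : set (borel X)) rho ->
  0 <= l <= r -> r <= h ->
  path_integral mu gamma l r rho =
    (\int[mu]_(x in (arc_piece gamma l r : set (borel X))) (rho x)%:E)%E.
Proof.
move=> no_atom rho0 mrho /andP[l0 lr] rh.
have mrhoE : measurable_fun (setT : set (borel X)) (EFin \o rho).
  exact/measurable_EFinP.
have l_in : [set gamma l] `<=` gamma @` `[l, r].
  by move=> _ ->; exists l; rewrite //= in_itv /= lexx lr.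
rewrite /path_integral -{1}(setDUK l_in) ge0_integral_setU //.
- rewrite null_set_integral ?add0e //; first exact: set1_borel_measurable.
  exact: measurable_funTS.
- exact: set1_borel_measurable.
- exact: arc_piece_measurable.
- exact: measurable_funTS.
- by move=> x _; rewrite lee_fin.
- by rewrite disj_set2E setDIK.
Qed.

Lemma integral_bigsetU_arc_pieces (rho : X -> R) n (l r : 'I_n -> R) :
  (forall x, 0 <= rho x) -> measurable_fun (setT : set (borel X)) rho ->
  (forall i, 0 <= l i /\ l i < r i /\ r i <= h) ->
  (forall i j, i != j -> r i <= l j \/ r j <= l i) ->
  (\int[mu]_(x in \big[setU/set0]_(i < n) arc_piece gamma (l i) (r i)) (rho x)%:E =
   \sum_(i < n) \int[mu]_(x in arc_piece gamma (l i) (r i)) (rho x)%:E)%E.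
Proof.
move=> rho0 mrho lr disj; rewrite ge0_integral_bigsetU ?index_enum_uniq //.
- by move=> i; have [l0 [_ rh]] := lr i; exact: arc_piece_measurable.
- exact/sub_trivIset/arc_pieces_trivIset.
- exact/measurable_EFinP/measurable_funTS.
- by move=> x _; rewrite lee_fin.
Qed.

End arc_pieces.

Theorem theorem2p4 (R : realType) (X : pmetricType R)
  (mu : {measure set (borel X) -> \bar R}) (f : X -> R)
  (gamma : R -> X) (h : R) :
  non_atomic mu ->
  in_Gamma_mu mu gamma 0 h ->
  mu_arc_length mu gamma h ->
  (exists rho : X -> R,
      (forall x, 0 <= rho x) /\
      measurable_fun (setT : set (borel X)) rho /\
      (forall s t, 0 <= s -> s < t -> t <= h ->
         (`|f (gamma s) - f (gamma t)|%:E <= path_integral mu gamma s t rho)%E /\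
         (path_integral mu gamma s t rho < +oo)%E)) ->
  abs_continuous_on (f \o gamma) 0 h.
Proof.
move=> no_atom [[_ gamma_cont] h0 gamma_inj _] arc_length [rho [rho0 [mrho bound]]].
have mE := arc_image_measurable gamma_cont (lexx 0) (lexx h).
have int_rho : mu.-integrable (gamma @` `[0, h]) (EFin \o rho).
  apply/integrableP; split; first exact/measurable_EFinP/measurable_funTS.
  under eq_integral do rewrite /= ger0_norm //.
  exact: (bound 0 h (lexx 0) h0 (lexx h)).2.
move=> eps eps0; have [delta delta0 small] := integral_abs_continuous mE int_rho eps0.
exists delta => // n l r lr disj short.
pose U : set (borel X) := \big[setU/set0]_(i < n) arc_piece gamma (l i) (r i).
have mU : measurable U.
  by apply: bigsetU_measurable => i _; have [l0 [_ rh]] := lr i;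
    exact: arc_piece_measurable.
have muU : (mu U < delta%:E)%E.
  by rewrite (measure_bigsetU_arc_pieces gamma_cont gamma_inj arc_length lr disj).
have := small _ mU (bigsetU_arc_pieces_sub lr) muU.
under eq_integral do rewrite ger0_norm //.
rewrite (integral_bigsetU_arc_pieces gamma_cont gamma_inj _ rho0 mrho lr disj).
rewrite -lte_fin -sumEFin; apply: le_lt_trans; apply: lee_sum => i _.
have [l0 [lri rh]] := lr i.
rewrite -(path_integral_arc_piece gamma_cont) ?l0 ?(ltW lri) //= distrC.
exact: (bound _ _ l0 lri rh).1.
Qed.
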